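(* Let $\lambda>0$. For every real $z>2$, $$\int_{-2}^{2}\frac{(4-x^2)^{\lambda-1/2}}{(z-x)^{\lambda}}\,dx \;=\; C_\lambda\,\big[G(z)\big]^{\lambda} \;=\; C_\lambda\left[\int_{-2}^{2}\frac{1}{z-x}\,\frac{\sqrt{4-x^2}}{2\pi}\,dx\right]^{\lambda} \;=\; C_\lambda\,\exp\left(-\lambda\int_{-2}^{2}\log(z-x)\,\frac{dx}{\pi\sqrt{4-x^2}}\right),$$ where $C_\lambda=\int_{-2}^{2}(4-x^2)^{\lambda-1/2}\,dx$.
   Context: $G$ denotes the Cauchy–Stieltjes transform of the standard Wigner (semicircle) law: $G(z)=\int_{-2}^2\frac{1}{z-x}\frac{\sqrt{4-x^2}}{2\pi}dx=\frac{z-\sqrt{z^2-4}}{2}$ for $z\in\mathbb{C}\setminus[-2,2]$ (branch with $G(z)\sim 1/z$ at infinity); for real $z>2$, $G(z)\in(0,1)$. Real powers and logarithms of positive reals are the usual real ones. *)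

From Stdlib Require Import Reals.
Open Scope R_scope.

(* Cauchy-Stieltjes transform of the semicircle law, closed form,
   for real z > 2: G(z) = (z - sqrt(z^2 - 4)) / 2. *)
Definition G (z : R) : R := (z - sqrt (z ^ 2 - 4)) / 2.

(* For integrands that are
   Riemann integrable on [a,b] this agrees with the ordinary integral. *)
Definition improper_integral (f : R -> R) (a b l : R) : Prop :=
  (forall c d, a < c -> c <= d -> d < b -> inhabited (Riemann_integrable f c d)) /\
  (forall eps, 0 < eps -> exists delta, 0 < delta /\
     forall c d (pr : Riemann_integrable f c d),
       a < c -> c < a + delta -> b - delta < d -> d < b ->
       Rabs (RiemannInt pr - l) < eps).

(* Let g = G(z), the root in (0,1) of g^2 - z g + 1 = 0, so that z = g + 1/g.
   All four integrals over (-2,2) are improper Riemann integrals; each is computed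
   by a monotone substitution from [0,pi] turning it into a proper Riemann
   integral of a continuous function (lemma [improper_of_subst]).
   - C_lambda: x = -2 cos t gives int_0^pi 4^lambda sin(t)^(2 lambda) dt.
   - I: x = 2 g sin^2 t - 2 cos t sqrt(1 - g^2 sin^2 t) gives the integrand of C
     times g^lambda (1 + g cos t / sqrt(1 - g^2 sin^2 t)); the second summand is odd
     about t = pi/2, hence I = g^lambda C_lambda.
   - The Stieltjes integral is I/(2 pi) for lambda = 1, where C_1 = 2 pi; so it is g.
   - J: x = -2 cos t gives (1/pi) int_0^pi ln(z + 2 cos t) dt
     = (1/pi) int_0^pi ln(1 + 2 g cos t + g^2) dt - ln g = -ln g, because the
     classical integral int_0^pi ln(1 - 2 h cos t + h^2) dt vanishes for |h| < 1.
   The file first develops the needed facts on Riemann integrals (substitution,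
   reflection) and on improper integrals, then treats C, I, the Stieltjes
   integral, the logarithmic integral and J in turn; the theorem comes last. *)

From Stdlib Require Import Reals Lra Psatz Ranalysis5.
Open Scope R_scope.

(** Elementary facts about the Riemann integral *)

Lemma RiemannInt_scal_out (f : R -> R) (a b k : R) (hab : a <= b)
  (pr1 : Riemann_integrable f a b) (pr2 : Riemann_integrable (fun x => k * f x) a b) :
  RiemannInt pr2 = k * RiemannInt pr1.
Proof.
  set (pr0 := RiemannInt_P14 a b 0).
  pose proof (RiemannInt_P13 pr0 pr1 (RiemannInt_P10 k pr0 pr1)) as Hlin.
  rewrite RiemannInt_P15 in Hlin.
  rewrite <- (RiemannInt_P18 (RiemannInt_P10 k pr0 pr1) pr2 hab).
  - rewrite Hlin. ring.
  - intros x _. unfold fct_cte. ring.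
Qed.

Lemma RiemannInt_antiderivative (f F : R -> R) (a b : R) (hab : a <= b)
  (Cf : forall x, a <= x <= b -> continuity_pt f x)
  (HF : forall x, a <= x <= b -> derivable_pt_lim F x (f x))
  (pr : Riemann_integrable f a b) : RiemannInt pr = F b - F a.
Proof.
  assert (AF : antiderivative f F a b).
  { split; [|exact hab]. intros t Ht.
    exists (exist _ (f t) (HF t Ht)). symmetry. apply derive_pt_eq_0, HF, Ht. }
  destruct (antiderivative_Ucte _ _ _ _ _ AF (RiemannInt_P29 hab Cf)) as [K HK].
  rewrite (RiemannInt_P20 hab (FTC_P1 hab Cf) pr), (HK a), (HK b) by lra. ring.
Qed.

Lemma RiemannInt_primitive_diff (f : R -> R) (m M u v : R) (hmM : m <= M)
  (Cf : forall x, m <= x <= M -> continuity_pt f x)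
  (Hu : m <= u <= M) (Hv : m <= v <= M) (pr : Riemann_integrable f u v) :
  RiemannInt pr = primitive hmM (FTC_P1 hmM Cf) v - primitive hmM (FTC_P1 hmM Cf) u.
Proof.
  unfold primitive.
  destruct (Rle_dec m v) as [Hmv|]; [|lra]; destruct (Rle_dec v M) as [HvM|]; [|lra].
  destruct (Rle_dec m u) as [Hmu|]; [|lra]; destruct (Rle_dec u M) as [HuM|]; [|lra].
  rewrite <- (RiemannInt_P26 (FTC_P1 hmM Cf Hmu HuM) pr (FTC_P1 hmM Cf Hmv HvM)). ring.
Qed.

Lemma RiemannInt_subst (f k phi phi' : R -> R) (c d m M : R) (hcd : c <= d) (hmM : m <= M)
  (Cf : forall x, m <= x <= M -> continuity_pt f x)
  (Ck : forall t, c <= t <= d -> continuity_pt k t)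
  (Hd : forall t, c <= t <= d -> derivable_pt_lim phi t (phi' t))
  (Hr : forall t, c <= t <= d -> m <= phi t <= M)
  (Hk : forall t, c <= t <= d -> k t = f (phi t) * phi' t)
  (pr1 : Riemann_integrable k c d) (pr2 : Riemann_integrable f (phi c) (phi d)) :
  RiemannInt pr1 = RiemannInt pr2.
Proof.
  set (F := primitive hmM (FTC_P1 hmM Cf)).
  rewrite (RiemannInt_primitive_diff f m M (phi c) (phi d) hmM Cf) by (apply Hr; lra).
  apply (RiemannInt_antiderivative k (fun t => F (phi t)) c d hcd Ck).
  intros t Ht. rewrite Hk by exact Ht.
  apply derivable_pt_lim_comp; [apply Hd, Ht|].
  apply RiemannInt_P28, Hr, Ht.
Qed.

Lemma RiemannInt_affine (f : R -> R) (al be a b u v : R) (hab : a <= b)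
  (Cf : forall x, continuity_pt f x) (Hu : al * a + be = u) (Hv : al * b + be = v)
  (pr1 : Riemann_integrable (fun t => al * f (al * t + be)) a b)
  (pr2 : Riemann_integrable f u v) :
  RiemannInt pr1 = RiemannInt pr2.
Proof.
  subst u v. set (u := al * a + be). set (v := al * b + be).
  apply (RiemannInt_subst f _ (fun t => al * t + be) (fun _ => al) a b
           (Rmin u v) (Rmax u v) hab (Rle_trans _ _ _ (Rmin_l u v) (Rmax_l u v))).
  - intros x _; apply Cf.
  - intros t _. apply continuity_pt_mult; [apply continuity_pt_const; intros ? ?; reflexivity|].
    apply (continuity_pt_comp (fun t => al * t + be) f); [reg|apply Cf].
  - intros t _.
    assert (D : derivable_pt_lim (fun t => al * t + be) t (al * 1 + 0)).
    { apply derivable_pt_lim_plus; [|apply derivable_pt_lim_const].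
      apply derivable_pt_lim_scal, derivable_pt_lim_id. }
    rewrite Rmult_1_r, Rplus_0_r in D. exact D.
  - intros t Ht. unfold u, v.
    destruct (Rle_dec 0 al).
    + rewrite Rmin_left, Rmax_right by nra. split; nra.
    + rewrite Rmin_right, Rmax_left by nra. split; nra.
  - intros t _. ring.
Qed.

Lemma RiemannInt_reflect (q : R -> R) (a b : R) (hab : a <= b)
  (Cq : forall x, continuity_pt q x)
  (pr1 : Riemann_integrable (fun t => q (a + b - t)) a b)
  (pr2 : Riemann_integrable q a b) : RiemannInt pr1 = RiemannInt pr2.
Proof.
  assert (prn : Riemann_integrable (fun t => -1 * q (-1 * t + (a + b))) a b).
  { refine (Riemann_integrable_ext _ _ (Riemann_integrable_scal (-1) pr1)).
    intros t _. do 2 f_equal. ring. }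
  pose proof (RiemannInt_affine q (-1) (a + b) a b b a hab Cq
                ltac:(ring) ltac:(ring) prn (RiemannInt_P1 pr2)) as Haff.
  rewrite (RiemannInt_P8 (RiemannInt_P1 pr2) pr2) in Haff.
  rewrite (RiemannInt_P18 prn (Riemann_integrable_scal (-1) pr1) hab) in Haff
    by (intros t _; do 2 f_equal; ring).
  rewrite (RiemannInt_scal_out _ a b (-1) hab pr1) in Haff. lra.
Qed.

Lemma RiemannInt_odd_reflection (q : R -> R) (a b : R) (hab : a <= b)
  (Cq : forall x, continuity_pt q x)
  (Hq : forall x, a <= x <= b -> q (a + b - x) = - q x)
  (pr : Riemann_integrable q a b) : RiemannInt pr = 0.
Proof.
  pose proof (Riemann_integrable_scal (-1) pr) as prn.
  assert (pr1 : Riemann_integrable (fun t => q (a + b - t)) a b).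
  { refine (Riemann_integrable_ext _ _ prn).
    intros x Hx. rewrite Rmin_left, Rmax_right in Hx by lra. rewrite Hq by lra. ring. }
  pose proof (RiemannInt_reflect q a b hab Cq pr1 pr) as E.
  rewrite (RiemannInt_P18 pr1 prn hab) in E by (intros x Hx; rewrite Hq by lra; ring).
  rewrite (RiemannInt_scal_out _ a b _ hab pr prn) in E. lra.
Qed.

Lemma RiemannInt_abs_le (h : R -> R) (u v M : R) (huv : u <= v)
  (HM : forall t, u < t < v -> Rabs (h t) <= M) (pr : Riemann_integrable h u v) :
  Rabs (RiemannInt pr) <= M * (v - u).
Proof.
  apply Rle_trans with (RiemannInt (RiemannInt_P16 pr)); [apply RiemannInt_P17, huv|].
  refine (proj2 (RiemannInt_const_bound _ huv (l := 0) _)).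
  intros t Ht. split; [apply Rabs_pos|apply HM, Ht].
Qed.

(** Improper integrals obtained by a monotone substitution *)

Lemma increasing_of_deriv_pos (phi phi' : R -> R) (a b : R)
  (Hd : forall t, a <= t <= b -> derivable_pt_lim phi t (phi' t))
  (Hpos : forall t, a < t < b -> 0 < phi' t) :
  forall x y, a <= x -> x < y -> y <= b -> phi x < phi y.
Proof.
  intros x y Hx Hxy Hy.
  destruct (MVT_cor2 phi phi' x y Hxy) as [c [Hc Hmvt]]; [intros c Hc; apply Hd; lra|].
  assert (0 < phi' c) by (apply Hpos; lra).
  assert (0 < phi' c * (y - x)) by (apply Rmult_lt_0_compat; lra). lra.
Qed.

Lemma continuous_preimage (phi : R -> R) (u v y : R) (huv : u <= v)
  (Cphi : forall t, u <= t <= v -> continuity_pt phi t)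
  (Hy : phi u < y < phi v) : exists t, u < t < v /\ phi t = y.
Proof.
  assert (huv' : u < v) by (destruct huv as [|E]; [assumption|subst; lra]).
  destruct (IVT_interv (fun t => phi t - y) u v) as [t [Ht Et]]; simpl; try lra.
  { intros t Ht. apply continuity_pt_minus; [apply Cphi, Ht|].
    apply continuity_pt_const; intros ? ?; reflexivity. }
  exists t. split; [|lra].
  destruct (Req_dec t u) as [Eu|Eu]; [subst; lra|].
  destruct (Req_dec t v) as [Ev|Ev]; [subst; lra|lra].
Qed.

Lemma RiemannInt_inner_close (h : R -> R) (a b c d M : R)
  (Hac : a <= c) (Hcd : c <= d) (Hdb : d <= b)
  (Ch : forall t, a <= t <= b -> continuity_pt h t)
  (HM : forall t, a < t < b -> Rabs (h t) <= M)
  (pr : Riemann_integrable h a b) (prcd : Riemann_integrable h c d) :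
  Rabs (RiemannInt prcd - RiemannInt pr) <= M * ((c - a) + (b - d)).
Proof.
  assert (prl : Riemann_integrable h a c)
    by (apply continuity_implies_RiemannInt; [lra|]; intros; apply Ch; lra).
  assert (prr : Riemann_integrable h d b)
    by (apply continuity_implies_RiemannInt; [lra|]; intros; apply Ch; lra).
  assert (prm : Riemann_integrable h c b)
    by (apply continuity_implies_RiemannInt; [lra|]; intros; apply Ch; lra).
  rewrite <- (RiemannInt_P26 prl prm pr), <- (RiemannInt_P26 prcd prr prm).
  replace (RiemannInt prcd - (RiemannInt prl + (RiemannInt prcd + RiemannInt prr)))
    with (- (RiemannInt prl + RiemannInt prr)) by ring.
  rewrite Rabs_Ropp.
  pose proof (RiemannInt_abs_le h a c M Hac (fun t Ht => HM t ltac:(lra)) prl).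
  pose proof (RiemannInt_abs_le h d b M Hdb (fun t Ht => HM t ltac:(lra)) prr).
  pose proof (Rabs_triang (RiemannInt prl) (RiemannInt prr)). lra.
Qed.

Lemma continuous_abs_bounded (h : R -> R) (a b : R) (hab : a <= b)
  (Ch : forall t, a <= t <= b -> continuity_pt h t) :
  exists M, 0 <= M /\ forall t, a <= t <= b -> Rabs (h t) <= M.
Proof.
  destruct (continuity_ab_maj (fun t => Rabs (h t)) a b hab) as [xM [HxM _]].
  - intros t Ht. apply (continuity_pt_comp h Rabs); [apply Ch, Ht|apply Rcontinuity_abs].
  - exists (Rabs (h xM)). split; [apply Rabs_pos|exact HxM].
Qed.

Lemma end_piece_width (eps M L : R) : 0 < eps -> 0 <= M -> 0 < L ->
  exists eta, (0 < eta <= L / 2) /\ M * (2 * eta) < eps.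
Proof.
  intros Heps HM HL. set (e := eps / (2 * (M + 1))).
  assert (He : e * (2 * (M + 1)) = eps) by (unfold e; field; lra).
  exists (Rmin e (L / 2)). pose proof (Rmin_l e (L / 2)). pose proof (Rmin_r e (L / 2)).
  assert (0 < Rmin e (L / 2)) by (apply Rmin_pos; [unfold e; apply Rdiv_lt_0_compat|]; lra).
  split; [lra|nra].
Qed.

Lemma improper_of_subst (f h phi phi' : R -> R) (a b a' b' : R) (hab' : a' < b')
  (Hd : forall t, a' <= t <= b' -> derivable_pt_lim phi t (phi' t))
  (Hpos : forall t, a' < t < b' -> 0 < phi' t)
  (Ha : phi a' = a) (Hb : phi b' = b)
  (Cf : forall x, a < x < b -> continuity_pt f x)
  (Ch : forall t, a' <= t <= b' -> continuity_pt h t)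
  (Heq : forall t, a' < t < b' -> h t = f (phi t) * phi' t)
  (pr : Riemann_integrable h a' b') :
  improper_integral f a b (RiemannInt pr).
Proof.
  pose proof (increasing_of_deriv_pos phi phi' a' b' Hd Hpos) as Mo.
  assert (MoW : forall x y, a' <= x -> x <= y -> y <= b' -> phi x <= phi y).
  { intros x y Hx [Hxy|Hxy] Hy; [left; apply Mo|subst]; lra. }
  assert (Cphi : forall t, a' <= t <= b' -> continuity_pt phi t).
  { intros t Ht. apply derivable_continuous_pt. exists (phi' t). apply Hd, Ht. }
  split.
  { intros c d Hc Hcd Hd'. constructor.
    apply continuity_implies_RiemannInt; [exact Hcd|]. intros x Hx; apply Cf; lra. }
  intros eps Heps.
  (* M bounds |h|; end pieces of width eta then contribute less than eps. *)
  destruct (continuous_abs_bounded h a' b' (Rlt_le _ _ hab') Ch) as [M [HM0 HM]].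
  destruct (end_piece_width eps M (b' - a') Heps HM0 ltac:(lra)) as [eta [[Heta0 Heta1] Heps']].
  set (al := phi (a' + eta)). set (be := phi (b' - eta)).
  assert (Hal : a < al) by (unfold al; rewrite <- Ha; apply Mo; lra).
  assert (Hbe : be < b) by (unfold be; rewrite <- Hb; apply Mo; lra).
  assert (Halbe : al <= be) by (apply MoW; lra).
  exists (Rmin (al - a) (b - be)). split; [apply Rmin_pos; lra|].
  intros c d prc Hc1 Hc2 Hd1 Hd2.
  pose proof (Rmin_l (al - a) (b - be)). pose proof (Rmin_r (al - a) (b - be)).
  destruct (continuous_preimage phi a' (a' + eta) c ltac:(lra)) as [c' [Hc' Ec]];
    [intros; apply Cphi; lra|fold al; lra|].
  destruct (continuous_preimage phi (b' - eta) b' d ltac:(lra)) as [d' [Hd' Ed]];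
    [intros; apply Cphi; lra|fold be; lra|].
  subst c d.
  assert (prcd : Riemann_integrable h c' d')
    by (apply continuity_implies_RiemannInt; [lra|]; intros; apply Ch; lra).
  rewrite <- (RiemannInt_subst f h phi phi' c' d' (phi c') (phi d') ltac:(lra)
    (MoW c' d' ltac:(lra) ltac:(lra) ltac:(lra))
    (fun x Hx => Cf x ltac:(lra)) (fun t Ht => Ch t ltac:(lra)) (fun t Ht => Hd t ltac:(lra))
    (fun t Ht => conj (MoW c' t ltac:(lra) ltac:(lra) ltac:(lra))
                      (MoW t d' ltac:(lra) ltac:(lra) ltac:(lra)))
    (fun t Ht => Heq t ltac:(lra)) prcd prc).
  eapply Rle_lt_trans.
  - apply (RiemannInt_inner_close h a' b' c' d' M); try lra; [exact Ch|].
    intros t Ht. apply HM. lra.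
  - nra.
Qed.

Lemma improper_ext (f f' : R -> R) (a b l : R) (hab : a < b)
  (H : forall x, a < x < b -> f x = f' x) :
  improper_integral f a b l -> improper_integral f' a b l.
Proof.
  intros [Hint Hcv]. split.
  { intros c d Hc Hcd Hd. destruct (Hint c d Hc Hcd Hd) as [p]. constructor.
    refine (Riemann_integrable_ext _ _ p).
    intros x Hx. rewrite Rmin_left, Rmax_right in Hx by lra. apply H; lra. }
  intros eps Heps. destruct (Hcv eps Heps) as [del [Hdel Hclose]].
  exists (Rmin del ((b - a) / 2)). split; [apply Rmin_pos; lra|].
  intros c d pr Hc1 Hc2 Hd1 Hd2.
  pose proof (Rmin_l del ((b - a) / 2)). pose proof (Rmin_r del ((b - a) / 2)).
  destruct (Hint c d ltac:(lra) ltac:(lra) ltac:(lra)) as [p].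
  rewrite <- (RiemannInt_P18 p pr ltac:(lra)) by (intros x Hx; apply H; lra).
  apply Hclose; lra.
Qed.

Lemma improper_scal (f : R -> R) (a b l k : R) (hab : a < b) :
  improper_integral f a b l -> improper_integral (fun x => k * f x) a b (k * l).
Proof.
  intros [Hint Hcv]. split.
  { intros c d Hc Hcd Hd. destruct (Hint c d Hc Hcd Hd) as [p]. constructor.
    apply Riemann_integrable_scal, p. }
  intros eps Heps. pose proof (Rabs_pos k) as Hk.
  destruct (Hcv (eps / (Rabs k + 1))) as [del [Hdel Hclose]];
    [apply Rdiv_lt_0_compat; lra|].
  exists (Rmin del ((b - a) / 2)). split; [apply Rmin_pos; lra|].
  intros c d pr Hc1 Hc2 Hd1 Hd2.
  pose proof (Rmin_l del ((b - a) / 2)). pose proof (Rmin_r del ((b - a) / 2)).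
  destruct (Hint c d ltac:(lra) ltac:(lra) ltac:(lra)) as [p].
  rewrite (RiemannInt_scal_out f c d k ltac:(lra) p pr).
  replace (k * RiemannInt p - k * l) with (k * (RiemannInt p - l)) by ring.
  rewrite Rabs_mult.
  assert (Hb : Rabs (RiemannInt p - l) < eps / (Rabs k + 1)) by (apply Hclose; lra).
  assert (E : eps / (Rabs k + 1) * (Rabs k + 1) = eps) by (field; lra).
  pose proof (Rabs_pos (RiemannInt p - l)). nra.
Qed.

Lemma Rpower_gt_0 (x y : R) : 0 < Rpower x y.
Proof. apply exp_pos. Qed.

Lemma continuity_pt_Rpower (u : R -> R) (y x : R) :
  continuity_pt u x -> 0 < u x -> continuity_pt (fun t => Rpower (u t) y) x.
Proof.
  intros Cu Hu. apply (continuity_pt_comp u (fun v => Rpower v y)); [exact Cu|].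
  apply derivable_continuous_pt. exists (y * Rpower (u x) (y - 1)).
  apply derivable_pt_lim_power, Hu.
Qed.

Lemma continuity_pt_ln (u : R -> R) (x : R) :
  continuity_pt u x -> 0 < u x -> continuity_pt (fun t => ln (u t)) x.
Proof.
  intros Cu Hu. apply (continuity_pt_comp u ln); [exact Cu|].
  apply derivable_continuous_pt. exists (/ u x). apply derivable_pt_lim_ln, Hu.
Qed.

Lemma continuity_pt_local (f g : R -> R) (x r : R) : 0 < r ->
  (forall t, Rabs (t - x) < r -> f t = g t) -> continuity_pt g x -> continuity_pt f x.
Proof.
  intros Hr Hfg Cg eps Heps. destruct (Cg eps Heps) as [alp [Halp Hg]].
  exists (Rmin alp r). split; [apply Rmin_pos; lra|].
  intros t [Ht1 Ht2]. simpl in *. unfold R_dist in *.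
  pose proof (Rmin_l alp r). pose proof (Rmin_r alp r).
  rewrite (Hfg t), (Hfg x) by (rewrite ?Rminus_diag, ?Rabs_R0; lra).
  apply Hg. split; [exact Ht1|]. simpl; unfold R_dist; lra.
Qed.

(* The power x^y for x > 0, extended by 0 to x <= 0; for y > 0 it is continuous
   everywhere, which gives continuous integrands such as sin(t)^(2 lambda). *)
Definition pos_power (x y : R) : R := if Rlt_dec 0 x then Rpower x y else 0.

Lemma pos_power_pos (x y : R) : 0 < x -> pos_power x y = Rpower x y.
Proof. intro H. unfold pos_power. destruct (Rlt_dec 0 x); [reflexivity|contradiction]. Qed.

Lemma pos_power_nonpos (x y : R) : x <= 0 -> pos_power x y = 0.
Proof. intro H. unfold pos_power. destruct (Rlt_dec 0 x); [lra|reflexivity]. Qed.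

Lemma pos_power_continuous (y x : R) : 0 < y -> continuity_pt (fun t => pos_power t y) x.
Proof.
  intro Hy. destruct (Rtotal_order x 0) as [Hx|[Hx|Hx]].
  - apply (continuity_pt_local _ (fun _ => 0) x (- x)); [lra| |reg].
    intros t Ht. apply pos_power_nonpos. apply Rabs_def2 in Ht. lra.
  - (* at 0: t^y < eps as soon as |t| < eps^(1/y) *)
    subst x. intros eps Heps. exists (Rpower eps (/ y)). split; [apply Rpower_gt_0|].
    intros t [_ Ht]. simpl in *. unfold R_dist in *. rewrite Rminus_0_r in Ht.
    rewrite (pos_power_nonpos 0), Rminus_0_r by lra.
    destruct (Rle_dec t 0) as [Ht0|Ht0].
    + rewrite pos_power_nonpos, Rabs_R0 by lra. exact Heps.
    + rewrite pos_power_pos, Rabs_right by (try left; try apply Rpower_gt_0; lra).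
      replace eps with (Rpower (Rpower eps (/ y)) y)
        by (rewrite Rpower_mult, Rinv_l by lra; apply Rpower_1, Heps).
      apply Rlt_Rpower_l; [exact Hy|]. apply Rabs_def2 in Ht. lra.
  - apply (continuity_pt_local _ (fun t => Rpower t y) x x); [lra| |].
    + intros t Ht. apply pos_power_pos. apply Rabs_def2 in Ht. lra.
    + apply (continuity_pt_Rpower (fun t => t)); [reg|exact Hx].
Qed.

Lemma ln_le_compat (x y : R) : 0 < x -> x <= y -> ln x <= ln y.
Proof. intros Hx [Hxy|<-]; [left; apply ln_increasing|]; lra. Qed.

Lemma ln_4 : ln 4 = 2 * ln 2.
Proof. replace 4 with (2 * 2) by ring. rewrite ln_mult by lra. ring. Qed.

Lemma ln_sqr (x : R) : 0 < x -> ln (x ^ 2) = 2 * ln x.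
Proof. intro H. replace (x ^ 2) with (x * x) by ring. rewrite ln_mult by lra. ring. Qed.

(** The substitution x = -2 cos t *)

Lemma sin_cos_sq (t : R) : sin t * sin t + cos t * cos t = 1.
Proof. pose proof (sin2_cos2 t) as H. unfold Rsqr in H. exact H. Qed.

Lemma derivable_pt_lim_neg2cos (t : R) :
  derivable_pt_lim (fun t => -2 * cos t) t (2 * sin t).
Proof.
  replace (2 * sin t) with (-2 * - sin t) by ring.
  apply (derivable_pt_lim_scal cos), derivable_pt_lim_cos.
Qed.

Lemma improper_cos_subst (f h : R -> R)
  (Cf : forall x, -2 < x < 2 -> continuity_pt f x)
  (Ch : forall t, 0 <= t <= PI -> continuity_pt h t)
  (Heq : forall t, 0 < t < PI -> h t = f (-2 * cos t) * (2 * sin t))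
  (pr : Riemann_integrable h 0 PI) :
  improper_integral f (-2) 2 (RiemannInt pr).
Proof.
  apply (improper_of_subst f h (fun t => -2 * cos t) (fun t => 2 * sin t) _ _ 0 PI PI_RGT_0);
    auto using derivable_pt_lim_neg2cos.
  - intros t Ht. pose proof (sin_gt_0 t (proj1 Ht) (proj2 Ht)). lra.
  - rewrite cos_0; ring.
  - rewrite cos_PI; ring.
Qed.

(** The constant C_lambda *)

Lemma weight_continuous (lam x : R) : -2 < x < 2 ->
  continuity_pt (fun x => Rpower (4 - x ^ 2) (lam - 1 / 2)) x.
Proof. intro Hx. apply (continuity_pt_Rpower (fun x => 4 - x ^ 2)); [reg|nra]. Qed.

(* After x = -2 cos t the integral C_lambda becomes int_0^pi 4^lambda sin(t)^(2 lambda). *)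
Definition C_integrand (lam t : R) : R := Rpower 4 lam * pos_power (sin t) (2 * lam).

Lemma C_integrand_continuous (lam t : R) : 0 < lam -> continuity_pt (C_integrand lam) t.
Proof.
  intro Hl. apply continuity_pt_mult; [reg|].
  apply (continuity_pt_comp sin (fun u => pos_power u (2 * lam))); [reg|].
  apply pos_power_continuous; lra.
Qed.

Lemma Rpower_sin_identity (lam s : R) : 0 < s ->
  Rpower (4 * s ^ 2) (lam - 1 / 2) * (2 * s) = Rpower 4 lam * Rpower s (2 * lam).
Proof.
  intro Hs. assert (0 < s ^ 2) by nra.
  apply ln_inv; [apply Rmult_lt_0_compat; [apply Rpower_gt_0|lra]|
                 apply Rmult_lt_0_compat; apply Rpower_gt_0|].
  rewrite !ln_mult, !ln_Rpower, ln_mult, ln_sqr, ln_4 by (try apply Rpower_gt_0; lra).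
  field.
Qed.

Lemma C_improper (lam : R) (Hl : 0 < lam) (pr : Riemann_integrable (C_integrand lam) 0 PI) :
  improper_integral (fun x => Rpower (4 - x ^ 2) (lam - 1 / 2)) (-2) 2 (RiemannInt pr).
Proof.
  apply improper_cos_subst.
  - apply weight_continuous.
  - intros; apply C_integrand_continuous, Hl.
  - intros t Ht. pose proof (sin_gt_0 t (proj1 Ht) (proj2 Ht)). pose proof (sin_cos_sq t).
    unfold C_integrand. rewrite pos_power_pos by lra.
    replace (4 - (-2 * cos t) ^ 2) with (4 * sin t ^ 2) by nra.
    symmetry. apply Rpower_sin_identity; lra.
Qed.

Lemma C_integrand_one (pr : Riemann_integrable (C_integrand 1) 0 PI) : RiemannInt pr = 2 * PI.
Proof.
  pose proof PI_RGT_0.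
  assert (pr2 : Riemann_integrable (fun t => 4 * (sin t * sin t)) 0 PI)
    by (apply continuity_implies_RiemannInt; [lra|]; intros; reg).
  rewrite (RiemannInt_P18 pr pr2); [|lra|].
  - rewrite (RiemannInt_antiderivative _ (fun t => 2 * (t - sin t * cos t)) 0 PI);
      [rewrite sin_0, sin_PI; ring|lra|intros; reg|].
    intros x _. pose proof (sin_cos_sq x) as Hsc.
    replace (4 * (sin x * sin x)) with (2 * (1 - (cos x * cos x + sin x * - sin x))) by lra.
    apply derivable_pt_lim_scal, derivable_pt_lim_minus; [apply derivable_pt_lim_id|].
    apply derivable_pt_lim_mult; [apply derivable_pt_lim_sin|apply derivable_pt_lim_cos].
  - intros x Hx. pose proof (sin_gt_0 x (proj1 Hx) (proj2 Hx)).
    unfold C_integrand. rewrite Rpower_1, pos_power_pos by lra.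
    replace (2 * 1) with (INR 2) by (simpl; ring). rewrite Rpower_pow by lra. simpl. ring.
Qed.

(** The integral I: the substitution adapted to z = g + 1/g *)

(* For 0 <= g < 1 put S(t) = sqrt(1 - g^2 sin^2 t), rho(t) = S(t) + g cos t and
   x = phi(t) = 2 g sin^2 t - 2 S(t) cos t.  Then phi maps [0,pi] increasingly onto
   [-2,2], phi'(t) = 2 sin t rho^2 / S, 4 - x^2 = 4 sin^2 t rho^2 and, when
   g z = 1 + g^2, z - x = rho^2 / g. *)
Definition root_term (g t : R) : R := sqrt (1 - g ^ 2 * (sin t * sin t)).
Definition rho (g t : R) : R := root_term g t + g * cos t.
Definition subst_I (g t : R) : R := 2 * g * (sin t * sin t) - 2 * root_term g t * cos t.
Definition subst_I' (g t : R) : R := 2 * sin t * rho g t ^ 2 / root_term g t.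

Section RootTerm.
Variables g t : R.
Hypothesis Hg : 0 <= g < 1.

Lemma root_term_arg_pos : 0 < 1 - g ^ 2 * (sin t * sin t).
Proof. pose proof (sin_cos_sq t). assert (0 <= cos t * cos t) by nra. nra. Qed.

Lemma root_term_pos : 0 < root_term g t.
Proof. apply sqrt_lt_R0, root_term_arg_pos. Qed.

Lemma root_term_sq : root_term g t * root_term g t = 1 - g ^ 2 * (sin t * sin t).
Proof. apply sqrt_sqrt. left; apply root_term_arg_pos. Qed.

(* rho > 0 since S^2 = 1 - g^2 + g^2 cos^2 t > (g cos t)^2. *)
Lemma rho_pos : 0 < rho g t.
Proof.
  pose proof root_term_pos. pose proof root_term_sq. pose proof (sin_cos_sq t).
  assert (root_term g t * root_term g t > (g * cos t) * (g * cos t)) by nra.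
  unfold rho. destruct (Rle_dec 0 (g * cos t)); nra.
Qed.

Lemma root_term_continuous : continuity_pt (root_term g) t.
Proof.
  apply (continuity_pt_comp (fun t => 1 - g ^ 2 * (sin t * sin t)) sqrt); [reg|].
  apply continuity_pt_sqrt. left; apply root_term_arg_pos.
Qed.

Lemma root_term_deriv :
  derivable_pt_lim (root_term g) t (- g ^ 2 * sin t * cos t / root_term g t).
Proof.
  assert (D : derivable_pt_lim (fun t => 1 - g ^ 2 * (sin t * sin t)) t
                (0 - g ^ 2 * (cos t * sin t + sin t * cos t))).
  { apply derivable_pt_lim_minus; [apply derivable_pt_lim_const|].
    apply derivable_pt_lim_scal, derivable_pt_lim_mult; apply derivable_pt_lim_sin. }
  pose proof (derivable_pt_lim_comp _ sqrt _ _ _ D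
                (derivable_pt_lim_sqrt _ root_term_arg_pos)) as Dc.
  fold (root_term g t) in Dc. unfold root_term at 1.
  replace (- g ^ 2 * sin t * cos t / root_term g t)
    with (/ (2 * root_term g t) * (0 - g ^ 2 * (cos t * sin t + sin t * cos t)))
    by (pose proof root_term_pos; field; lra).
  exact Dc.
Qed.

Lemma subst_I_deriv : derivable_pt_lim (subst_I g) t (subst_I' g t).
Proof.
  assert (D : derivable_pt_lim (subst_I g) t
     (2 * g * (cos t * sin t + sin t * cos t) -
      (2 * (- g ^ 2 * sin t * cos t / root_term g t) * cos t + 2 * root_term g t * - sin t))).
  { apply derivable_pt_lim_minus.
    - apply derivable_pt_lim_scal, derivable_pt_lim_mult; apply derivable_pt_lim_sin.
    - apply (derivable_pt_lim_mult (fun t => 2 * root_term g t) cos);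
        [apply derivable_pt_lim_scal, root_term_deriv|apply derivable_pt_lim_cos]. }
  replace (subst_I' g t) with (2 * g * (cos t * sin t + sin t * cos t) -
      (2 * (- g ^ 2 * sin t * cos t / root_term g t) * cos t + 2 * root_term g t * - sin t));
    [exact D|].
  unfold subst_I', rho. pose proof root_term_pos. pose proof root_term_sq.
  pose proof (sin_cos_sq t). field. lra.
Qed.

Lemma subst_I_width : 4 - subst_I g t ^ 2 = 4 * sin t ^ 2 * rho g t ^ 2.
Proof.
  pose proof root_term_sq. pose proof (sin_cos_sq t). unfold subst_I, rho.
  set (S := root_term g t) in *. set (s := sin t) in *. set (c := cos t) in *.
  replace ((2 * g * (s * s) - 2 * S * c) ^ 2) with
    (4 * g ^ 2 * (s * s) * (s * s) - 8 * g * (s * s) * S * c + 4 * (S * S) * (c * c)) by ring.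
  replace ((S + g * c) ^ 2) with (S * S + 2 * g * c * S + g ^ 2 * (c * c)) by ring.
  rewrite H. replace (c * c) with (1 - s * s) by lra. ring.
Qed.

Lemma subst_I_gap (z : R) : 0 < g -> g * z = 1 + g ^ 2 -> z - subst_I g t = rho g t ^ 2 / g.
Proof.
  intros Hg0 Hz. pose proof root_term_sq. pose proof (sin_cos_sq t).
  apply (Rmult_eq_reg_l g); [|lra]. unfold subst_I, rho. field_simplify; [|lra].
  set (S := root_term g t) in *. set (s := sin t) in *. set (c := cos t) in *.
  replace (S ^ 2) with (S * S) by ring. rewrite H, Hz.
  replace (c ^ 2) with (1 - s * s) by nra. ring.
Qed.

End RootTerm.

Lemma subst_I_power_identity (lam g s S r : R) :
  0 < g -> 0 < s -> 0 < S -> 0 < r ->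
  Rpower (4 * s ^ 2 * r ^ 2) (lam - 1 / 2) / Rpower (r ^ 2 / g) lam * (2 * s * r ^ 2 / S)
  = Rpower g lam * (Rpower 4 lam * Rpower s (2 * lam)) * (r / S).
Proof.
  intros Hg Hs HS Hr. assert (0 < s ^ 2) by nra. assert (0 < r ^ 2) by nra.
  assert (0 < r ^ 2 / g) by (apply Rdiv_lt_0_compat; lra).
  assert (0 < 4 * s ^ 2 * r ^ 2) by nra.
  assert (0 < 2 * s * r ^ 2 / S) by (apply Rdiv_lt_0_compat; nra).
  assert (0 < r / S) by (apply Rdiv_lt_0_compat; lra).
  pose proof (Rpower_gt_0 g lam). pose proof (Rpower_gt_0 4 lam).
  pose proof (Rpower_gt_0 s (2 * lam)). pose proof (Rpower_gt_0 (r ^ 2 / g) lam).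
  pose proof (Rpower_gt_0 (4 * s ^ 2 * r ^ 2) (lam - 1 / 2)).
  apply ln_inv.
  - apply Rmult_lt_0_compat; [apply Rdiv_lt_0_compat|]; lra.
  - apply Rmult_lt_0_compat; [apply Rmult_lt_0_compat; [|apply Rmult_lt_0_compat]|]; lra.
  - unfold Rdiv. rewrite !ln_mult, !ln_Rinv, !ln_Rpower, !ln_mult, !ln_Rinv, !ln_sqr, ln_4
      by (try apply Rinv_0_lt_compat; try apply Rmult_lt_0_compat; try apply Rinv_0_lt_compat;
          try nra; lra).
    field.
Qed.

Definition odd_part (lam g t : R) : R := pos_power (sin t) (2 * lam) * cos t / root_term g t.

Definition I_integrand (lam g t : R) : R :=
  Rpower g lam * C_integrand lam t + Rpower g lam * Rpower 4 lam * g * odd_part lam g t.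

Lemma odd_part_continuous (lam g t : R) : 0 < lam -> 0 <= g < 1 ->
  continuity_pt (odd_part lam g) t.
Proof.
  intros Hl Hg. apply continuity_pt_div.
  - apply continuity_pt_mult; [|reg].
    apply (continuity_pt_comp sin (fun u => pos_power u (2 * lam))); [reg|].
    apply pos_power_continuous; lra.
  - apply root_term_continuous, Hg.
  - pose proof (root_term_pos g t Hg). lra.
Qed.

Lemma I_integrand_continuous (lam g t : R) : 0 < lam -> 0 <= g < 1 ->
  continuity_pt (I_integrand lam g) t.
Proof.
  intros Hl Hg. apply continuity_pt_plus; apply continuity_pt_mult; try reg.
  - apply C_integrand_continuous, Hl.
  - apply odd_part_continuous; assumption.
Qed.

Lemma I_improper (lam z g : R) (Hl : 0 < lam) (Hg : 0 < g < 1) (Hz : g * z = 1 + g ^ 2)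
  (pr : Riemann_integrable (I_integrand lam g) 0 PI) :
  improper_integral (fun x => Rpower (4 - x ^ 2) (lam - 1 / 2) / Rpower (z - x) lam)
    (-2) 2 (RiemannInt pr).
Proof.
  assert (Hg' : 0 <= g < 1) by lra.
  assert (Hz2 : 2 < z) by nra.
  assert (Hsin0 : forall t, 0 < t < PI -> 0 < sin t)
    by (intros t Ht; apply sin_gt_0; apply Ht).
  apply (improper_of_subst _ _ (subst_I g) (subst_I' g) (-2) 2 0 PI PI_RGT_0).
  - intros; apply subst_I_deriv, Hg'.
  - intros t Ht. pose proof (Hsin0 t Ht). pose proof (root_term_pos g t Hg').
    pose proof (rho_pos g t Hg'). unfold subst_I'.
    apply Rdiv_lt_0_compat; [apply Rmult_lt_0_compat|]; nra.
  - unfold subst_I, root_term. rewrite sin_0, cos_0.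
    replace (1 - g ^ 2 * (0 * 0)) with 1 by ring. rewrite sqrt_1. ring.
  - unfold subst_I, root_term. rewrite sin_PI, cos_PI.
    replace (1 - g ^ 2 * (0 * 0)) with 1 by ring. rewrite sqrt_1. ring.
  - intros x Hx. apply continuity_pt_div.
    + apply weight_continuous, Hx.
    + apply (continuity_pt_Rpower (fun x => z - x)); [reg|lra].
    + pose proof (Rpower_gt_0 (z - x) lam). lra.
  - intros; apply I_integrand_continuous; assumption.
  - intros t Ht. pose proof (Hsin0 t Ht). pose proof (root_term_pos g t Hg').
    pose proof (rho_pos g t Hg').
    rewrite subst_I_width, subst_I_gap by lra. unfold subst_I'.
    rewrite subst_I_power_identity by lra.
    unfold I_integrand, C_integrand, odd_part, rho. rewrite pos_power_pos by lra.
    field. lra.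
Qed.

(* The odd part integrates to zero, so I = g^lambda C_lambda. *)
Lemma I_value (lam g : R) (Hl : 0 < lam) (Hg : 0 < g < 1)
  (prI : Riemann_integrable (I_integrand lam g) 0 PI)
  (prC : Riemann_integrable (C_integrand lam) 0 PI) :
  RiemannInt prI = Rpower g lam * RiemannInt prC.
Proof.
  assert (Hg' : 0 <= g < 1) by lra. pose proof PI_RGT_0.
  assert (prq : Riemann_integrable (odd_part lam g) 0 PI).
  { apply continuity_implies_RiemannInt; [lra|]. intros; apply odd_part_continuous; assumption. }
  pose proof (Riemann_integrable_scal (Rpower g lam) prC) as prs.
  transitivity (RiemannInt prs + Rpower g lam * Rpower 4 lam * g * RiemannInt prq);
    [apply RiemannInt_P13|].
  rewrite (RiemannInt_scal_out _ 0 PI _ ltac:(lra) prC prs).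
  rewrite (RiemannInt_odd_reflection (odd_part lam g) 0 PI); [ring|lra| |].
  - intros; apply odd_part_continuous; assumption.
  - intros x Hx. unfold odd_part, root_term.
    replace (0 + PI - x) with (PI - x) by ring. rewrite sin_PI_x, cos_minus, cos_PI, sin_PI.
    unfold Rdiv. ring.
Qed.

(** The Cauchy-Stieltjes transform *)

Lemma G_root (z : R) : 2 < z -> 0 < G z < 1 /\ G z * z = 1 + G z ^ 2.
Proof.
  intro Hz. unfold G.
  assert (H0 : 0 < z ^ 2 - 4) by nra.
  pose proof (sqrt_lt_R0 _ H0). pose proof (sqrt_sqrt _ (Rlt_le _ _ H0)).
  set (s := sqrt (z ^ 2 - 4)) in *.
  assert (s < z) by nra. assert (z - 2 < s) by nra.
  split; [split; lra|]. field_simplify. nra.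
Qed.

(* For lambda = 1 the integral I is 2 pi times the Stieltjes integral. *)
Lemma Gint_improper (z : R) (Hz : 2 < z) :
  improper_integral (fun x => / (z - x) * (sqrt (4 - x ^ 2) / (2 * PI))) (-2) 2 (G z).
Proof.
  destruct (G_root z Hz) as [Hg Hgz]. pose proof PI_RGT_0.
  assert (prC : Riemann_integrable (C_integrand 1) 0 PI).
  { apply continuity_implies_RiemannInt; [lra|]. intros; apply C_integrand_continuous; lra. }
  assert (prI : Riemann_integrable (I_integrand 1 (G z)) 0 PI).
  { apply continuity_implies_RiemannInt; [lra|]. intros; apply I_integrand_continuous; lra. }
  pose proof (I_improper 1 z (G z) ltac:(lra) Hg Hgz prI) as HI.
  rewrite (I_value 1 (G z) ltac:(lra) Hg prI prC), C_integrand_one, Rpower_1 in HI by lra.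
  apply (improper_scal _ (-2) 2 _ (/ (2 * PI))) in HI; [|lra].
  replace (/ (2 * PI) * (G z * (2 * PI))) with (G z) in HI by (field; lra).
  refine (improper_ext _ _ (-2) 2 _ ltac:(lra) _ HI).
  intros x Hx. replace (1 - 1 / 2) with (/ 2) by field.
  rewrite Rpower_sqrt, Rpower_1 by nra. field. split; lra.
Qed.

(** The logarithmic integral int_0^pi ln(1 - 2 h cos t + h^2) dt vanishes for |h| < 1 *)

(* Writing P(h) for this integral: P(-h) = P(h) by t -> pi - t, and
   P(h) + P(-h) = P(h^2) because the product of the two arguments is the
   argument for h^2 at 2t.  Hence P(h^(2^n)) = 2^n P(h), while P stays bounded
   on |h| <= |h0| < 1; so P(h0) = 0. *)
Definition log_kernel (h t : R) : R := ln (1 - 2 * h * cos t + h ^ 2).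

Lemma cos_bound (t : R) : -1 <= cos t <= 1.
Proof. pose proof (sin_cos_sq t). split; nra. Qed.

Lemma log_kernel_arg_bounds (h t : R) :
  (1 - Rabs h) ^ 2 <= 1 - 2 * h * cos t + h ^ 2 <= (1 + Rabs h) ^ 2.
Proof.
  pose proof (cos_bound t).
  destruct (Rle_dec 0 h); [rewrite Rabs_right by lra|rewrite Rabs_left by lra]; split; nra.
Qed.

Lemma log_kernel_arg_pos (h t : R) : Rabs h < 1 -> 0 < 1 - 2 * h * cos t + h ^ 2.
Proof. intro H. pose proof (log_kernel_arg_bounds h t). nra. Qed.

Lemma log_kernel_continuous (h t : R) : Rabs h < 1 -> continuity_pt (log_kernel h) t.
Proof.
  intro H. apply (continuity_pt_ln (fun t => 1 - 2 * h * cos t + h ^ 2)); [reg|].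
  apply log_kernel_arg_pos, H.
Qed.

Lemma log_kernel_integrable (h a b : R) : Rabs h < 1 -> a <= b ->
  Riemann_integrable (log_kernel h) a b.
Proof.
  intros H Hab. apply continuity_implies_RiemannInt; [exact Hab|].
  intros; apply log_kernel_continuous, H.
Qed.

Lemma log_kernel_even (h : R) (H : Rabs h < 1) (pr1 : Riemann_integrable (log_kernel h) 0 PI)
  (pr2 : Riemann_integrable (log_kernel (- h)) 0 PI) : RiemannInt pr1 = RiemannInt pr2.
Proof.
  pose proof PI_RGT_0.
  assert (pr3 : Riemann_integrable (fun t => log_kernel h (0 + PI - t)) 0 PI).
  { apply continuity_implies_RiemannInt; [lra|]. intros x _.
    apply (continuity_pt_comp (fun t => 0 + PI - t) (log_kernel h)); [reg|].
    apply log_kernel_continuous, H. }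
  rewrite <- (RiemannInt_reflect (log_kernel h) 0 PI ltac:(lra)
                (fun x => log_kernel_continuous h x H) pr3 pr1).
  apply RiemannInt_P18; [lra|]. intros x _. unfold log_kernel.
  replace (0 + PI - x) with (PI - x) by ring. rewrite cos_minus, cos_PI, sin_PI. f_equal. ring.
Qed.

(* (1 - 2h cos t + h^2)(1 + 2h cos t + h^2) = 1 - 2h^2 cos 2t + h^4. *)
Lemma log_kernel_product (h t : R) : Rabs h < 1 ->
  log_kernel h t + log_kernel (- h) t = log_kernel (h ^ 2) (2 * t + 0).
Proof.
  intro H. assert (Hm : Rabs (- h) < 1) by (rewrite Rabs_Ropp; exact H).
  unfold log_kernel. rewrite <- ln_mult by (apply log_kernel_arg_pos; assumption).
  f_equal. rewrite Rplus_0_r, cos_2a_cos. pose proof (sin_cos_sq t). ring.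
Qed.

Lemma log_kernel_shift (h t : R) : log_kernel h (1 * t + PI) = log_kernel (- h) t.
Proof. unfold log_kernel. rewrite Rmult_1_l, neg_cos. f_equal. ring. Qed.

Lemma abs_sqr_lt_1 (h : R) : Rabs h < 1 -> Rabs (h ^ 2) < 1.
Proof.
  intro H. pose proof (Rabs_pos h). rewrite <- RPow_abs. nra.
Qed.

Lemma log_kernel_double (h : R) (H : Rabs h < 1)
  (pr1 : Riemann_integrable (log_kernel h) 0 PI)
  (pr2 : Riemann_integrable (log_kernel (h ^ 2)) 0 PI) :
  2 * RiemannInt pr1 = RiemannInt pr2.
Proof.
  pose proof PI_RGT_0. pose proof (abs_sqr_lt_1 h H) as H2.
  assert (Hm : Rabs (- h) < 1) by (rewrite Rabs_Ropp; exact H).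
  assert (H2m : Rabs (- h ^ 2) < 1) by (rewrite Rabs_Ropp; exact H2).
  assert (C2 : forall x, continuity_pt (log_kernel (h ^ 2)) x)
    by (intros; apply log_kernel_continuous, H2).
  (* P(h) + P(-h) = int_0^pi k(2t) dt, with k the kernel for h^2 *)
  pose proof (log_kernel_integrable (- h) 0 PI Hm ltac:(lra)) as prm.
  assert (prD : Riemann_integrable (fun t => log_kernel (h ^ 2) (2 * t + 0)) 0 PI).
  { apply continuity_implies_RiemannInt; [lra|]. intros t _.
    apply (continuity_pt_comp (fun t => 2 * t + 0) (log_kernel (h ^ 2))); [reg|apply C2]. }
  assert (Hsum : RiemannInt pr1 + 1 * RiemannInt prm = RiemannInt prD).
  { rewrite <- (RiemannInt_P13 pr1 prm (RiemannInt_P10 1 pr1 prm)).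
    apply RiemannInt_P18; [lra|]. intros t _. rewrite Rmult_1_l. apply log_kernel_product, H. }
  rewrite <- (log_kernel_even h H pr1 prm) in Hsum.
  (* int_0^pi 2 k(2t) dt = int_0^(2pi) k = P(h^2) + int_pi^(2pi) k *)
  pose proof (log_kernel_integrable (h ^ 2) 0 (2 * PI) H2 ltac:(lra)) as pr02.
  pose proof (log_kernel_integrable (h ^ 2) PI (2 * PI) H2 ltac:(lra)) as prb.
  pose proof (RiemannInt_affine _ 2 0 0 PI 0 (2 * PI) ltac:(lra) C2 ltac:(ring) ltac:(ring)
                (Riemann_integrable_scal 2 prD) pr02) as Hdil.
  rewrite (RiemannInt_scal_out _ 0 PI 2 ltac:(lra) prD), <- (RiemannInt_P26 pr2 prb pr02)
    in Hdil.
  (* int_pi^(2pi) k = P(-h^2) = P(h^2) *)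
  assert (prs : Riemann_integrable (fun t => 1 * log_kernel (h ^ 2) (1 * t + PI)) 0 PI).
  { apply continuity_implies_RiemannInt; [lra|]. intros t _. apply continuity_pt_mult; [reg|].
    apply (continuity_pt_comp (fun t => 1 * t + PI) (log_kernel (h ^ 2))); [reg|apply C2]. }
  pose proof (RiemannInt_affine _ 1 PI 0 PI PI (2 * PI) ltac:(lra) C2 ltac:(ring) ltac:(ring)
                prs prb) as Hshift.
  pose proof (log_kernel_integrable (- h ^ 2) 0 PI H2m ltac:(lra)) as prm2.
  rewrite (RiemannInt_P18 prs prm2) in Hshift
    by (lra || (intros t _; rewrite Rmult_1_l; apply log_kernel_shift)).
  rewrite <- (log_kernel_even (h ^ 2) H2 pr2 prm2) in Hshift.
  lra.
Qed.

(* P is bounded on |h| <= g < 1: the argument lies in [(1-g)^2, 4]. *)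
Lemma log_kernel_bound (g h : R) (Hg : 0 < g < 1) (Hh : Rabs h <= g)
  (pr : Riemann_integrable (log_kernel h) 0 PI) :
  Rabs (RiemannInt pr) <= (2 * ln 2 - 2 * ln (1 - g)) * PI.
Proof.
  pose proof PI_RGT_0. pose proof (Rabs_pos h).
  replace ((2 * ln 2 - 2 * ln (1 - g)) * PI) with ((2 * ln 2 - 2 * ln (1 - g)) * (PI - 0))
    by ring.
  apply RiemannInt_abs_le; [lra|]. intros t _. unfold log_kernel.
  pose proof (log_kernel_arg_bounds h t) as [Hlo Hhi].
  assert (A1 : (1 - g) ^ 2 <= 1 - 2 * h * cos t + h ^ 2) by nra.
  assert (A2 : 1 - 2 * h * cos t + h ^ 2 <= 4) by nra.
  assert (0 < (1 - g) ^ 2) by nra.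
  assert (L1 : ln ((1 - g) ^ 2) <= ln (1 - 2 * h * cos t + h ^ 2)) by (apply ln_le_compat; lra).
  assert (L2 : ln (1 - 2 * h * cos t + h ^ 2) <= ln 4) by (apply ln_le_compat; lra).
  assert (L3 : ln ((1 - g) ^ 2) < 0) by (rewrite <- ln_1; apply ln_increasing; nra).
  assert (L4 : 0 < ln 4) by (rewrite <- ln_1; apply ln_increasing; lra).
  rewrite <- (ln_sqr (1 - g)), <- ln_4 by lra.
  apply Rabs_le. lra.
Qed.

Fixpoint iterated_square (g : R) (n : nat) : R :=
  match n with O => g | S n => iterated_square g n ^ 2 end.

Lemma iterated_square_bounds (g : R) (n : nat) : 0 < g < 1 -> 0 < iterated_square g n <= g.
Proof. intro Hg. induction n as [|n IH]; simpl; nra. Qed.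

(* P(g) = 0: otherwise 2^n |P(g)| = |P(g^(2^n))| would be bounded in n. *)
Lemma log_kernel_zero (g : R) (Hg : 0 < g < 1) (pr : Riemann_integrable (log_kernel g) 0 PI) :
  RiemannInt pr = 0.
Proof.
  pose proof PI_RGT_0.
  assert (Hu : forall n, Rabs (iterated_square g n) <= g /\ Rabs (iterated_square g n) < 1).
  { intro n. pose proof (iterated_square_bounds g n Hg). rewrite Rabs_right; lra. }
  assert (Hdbl : forall n (p : Riemann_integrable (log_kernel (iterated_square g n)) 0 PI),
             RiemannInt p = 2 ^ n * RiemannInt pr).
  { induction n as [|n IH]; intros p.
    - simpl. rewrite Rmult_1_l. apply RiemannInt_P5.
    - pose proof (log_kernel_integrable _ 0 PI (proj2 (Hu n)) ltac:(lra)) as p'.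
      transitivity (2 * RiemannInt p'); [symmetry; apply log_kernel_double, Hu|].
      rewrite (IH p'). simpl. ring. }
  set (B := (2 * ln 2 - 2 * ln (1 - g)) * PI).
  destruct (Req_dec (RiemannInt pr) 0) as [E|E]; [exact E|exfalso].
  pose proof (Rabs_pos_lt _ E) as HA.
  destruct (INR_unbounded (B / Rabs (RiemannInt pr))) as [n Hn].
  pose proof (log_kernel_integrable _ 0 PI (proj2 (Hu n)) ltac:(lra)) as p.
  pose proof (log_kernel_bound g _ Hg (proj1 (Hu n)) p) as Hb. fold B in Hb.
  rewrite (Hdbl n p), Rabs_mult, Rabs_right in Hb by (left; apply pow_lt; lra).
  assert (Hpow : INR n < 2 ^ n).
  { pose proof (lt_INR _ _ (Nat.pow_gt_lin_r 2 n (Nat.lt_succ_diag_r 1))) as Hp.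
    rewrite pow_INR in Hp. exact Hp. }
  assert (B < INR n * Rabs (RiemannInt pr)).
  { apply (Rmult_lt_compat_r (Rabs (RiemannInt pr))) in Hn; [|exact HA].
    unfold Rdiv in Hn. rewrite Rmult_assoc, Rinv_l, Rmult_1_r in Hn by lra. exact Hn. }
  nra.
Qed.

(** The logarithmic potential J *)

(* After x = -2 cos t the integral J becomes (1/pi) int_0^pi ln(z + 2 cos t) dt. *)
Definition J_integrand (z t : R) : R := / PI * ln (z + 2 * cos t).

Lemma J_integrand_continuous (z t : R) : 2 < z -> continuity_pt (J_integrand z) t.
Proof.
  intro Hz. apply continuity_pt_mult; [reg|].
  apply (continuity_pt_ln (fun t => z + 2 * cos t)); [reg|]. pose proof (cos_bound t). lra.
Qed.

Lemma J_improper (z : R) (Hz : 2 < z) (pr : Riemann_integrable (J_integrand z) 0 PI) :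
  improper_integral (fun x => ln (z - x) / (PI * sqrt (4 - x ^ 2))) (-2) 2 (RiemannInt pr).
Proof.
  pose proof PI_RGT_0.
  apply improper_cos_subst.
  - intros x Hx. assert (0 < sqrt (4 - x ^ 2)) by (apply sqrt_lt_R0; nra).
    apply continuity_pt_div.
    + apply (continuity_pt_ln (fun x => z - x)); [reg|lra].
    + apply continuity_pt_mult; [reg|].
      apply (continuity_pt_comp (fun x => 4 - x ^ 2) sqrt); [reg|].
      apply continuity_pt_sqrt. nra.
    + apply Rgt_not_eq, Rmult_lt_0_compat; lra.
  - intros; apply J_integrand_continuous, Hz.
  - intros t Ht. pose proof (sin_gt_0 t (proj1 Ht) (proj2 Ht)). unfold J_integrand.
    replace (4 - (-2 * cos t) ^ 2) with ((2 * sin t) ^ 2) by (pose proof (sin_cos_sq t); nra).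
    rewrite sqrt_pow2 by lra. replace (z - -2 * cos t) with (z + 2 * cos t) by ring.
    field. lra.
Qed.

(* With g = G(z): z + 2 cos t = (1 + 2 g cos t + g^2) / g. *)
Lemma ln_shifted_cos (z t : R) : 2 < z ->
  ln (z + 2 * cos t) = log_kernel (- G z) t - ln (G z).
Proof.
  intro Hz. destruct (G_root z Hz) as [Hg Hgz]. unfold log_kernel.
  assert (Harg : 0 < 1 - 2 * - G z * cos t + (- G z) ^ 2)
    by (apply log_kernel_arg_pos; rewrite Rabs_Ropp, Rabs_right; lra).
  unfold Rminus. rewrite <- ln_Rinv, <- ln_mult by (try apply Rinv_0_lt_compat; lra).
  f_equal. apply (Rmult_eq_reg_l (G z)); [|lra]. field_simplify; [|lra]. nra.
Qed.

(* J = (P(-g) + pi (- ln g)) / pi = - ln g. *)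
Lemma J_value (z : R) (Hz : 2 < z) (pr : Riemann_integrable (J_integrand z) 0 PI) :
  RiemannInt pr = - ln (G z).
Proof.
  destruct (G_root z Hz) as [Hg Hgz]. pose proof PI_RGT_0.
  assert (Hm : Rabs (- G z) < 1) by (rewrite Rabs_Ropp, Rabs_right; lra).
  pose proof (log_kernel_integrable (- G z) 0 PI Hm ltac:(lra)) as prL.
  pose proof (RiemannInt_P10 (- ln (G z)) prL (RiemannInt_P14 0 PI 1)) as prF.
  pose proof (Riemann_integrable_scal (/ PI) prF) as prS.
  rewrite (RiemannInt_P18 pr prS ltac:(lra)).
  - rewrite (RiemannInt_scal_out _ 0 PI _ ltac:(lra) prF prS), (RiemannInt_P13 prL (RiemannInt_P14 0 PI 1) prF),
      RiemannInt_P15.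
    pose proof (log_kernel_integrable (G z) 0 PI ltac:(rewrite Rabs_right; lra) ltac:(lra)) as prG.
    rewrite <- (log_kernel_even (G z) ltac:(rewrite Rabs_right; lra) prG prL),
      (log_kernel_zero (G z) Hg prG).
    field. lra.
  - intros t _. unfold J_integrand, fct_cte. rewrite ln_shifted_cos by exact Hz. ring.
Qed.

Theorem mainTheorem1 (lambda : R) (Hl : 0 < lambda) (z : R) (Hz : 2 < z) :
  exists I C Gint J : R,
    improper_integral
      (fun x => Rpower (4 - x ^ 2) (lambda - 1 / 2) / Rpower (z - x) lambda)
      (-2) 2 I /\
    improper_integral (fun x => Rpower (4 - x ^ 2) (lambda - 1 / 2)) (-2) 2 C /\
    improper_integral (fun x => / (z - x) * (sqrt (4 - x ^ 2) / (2 * PI))) (-2) 2 Gint /\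
    improper_integral (fun x => ln (z - x) / (PI * sqrt (4 - x ^ 2))) (-2) 2 J /\
    I = C * Rpower (G z) lambda /\
    Gint = G z /\
    I = C * Rpower Gint lambda /\
    I = C * exp (- lambda * J).
Proof.
  destruct (G_root z Hz) as [Hg Hgz]. pose proof PI_RGT_0.
  assert (prC : Riemann_integrable (C_integrand lambda) 0 PI)
    by (apply continuity_implies_RiemannInt; [lra|]; intros; apply C_integrand_continuous, Hl).
  assert (prI : Riemann_integrable (I_integrand lambda (G z)) 0 PI)
    by (apply continuity_implies_RiemannInt; [lra|]; intros; apply I_integrand_continuous; lra).
  assert (prJ : Riemann_integrable (J_integrand z) 0 PI)
    by (apply continuity_implies_RiemannInt; [lra|]; intros; apply J_integrand_continuous, Hz).
  pose proof (I_improper lambda z (G z) Hl Hg Hgz prI) as HI.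
  rewrite (I_value lambda (G z) Hl Hg prI prC) in HI.
  pose proof (J_improper z Hz prJ) as HJ. rewrite (J_value z Hz prJ) in HJ.
  exists (Rpower (G z) lambda * RiemannInt prC), (RiemannInt prC), (G z), (- ln (G z)).
  split; [exact HI|]. split; [apply C_improper, Hl|].
  split; [apply Gint_improper, Hz|]. split; [exact HJ|].
  split; [ring|]. split; [reflexivity|]. split; [ring|].
  unfold Rpower. replace (- lambda * - ln (G z)) with (lambda * ln (G z)) by ring. ring.
Qed.
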